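(* Let $G=(\mathcal V,\mathcal E)$ be an acyclic ADT network over $\mathbb F_q$ with a single source supernode $S$ and destination supernodes $T_1,\dots,T_N$, and let $A$, $F$, $B$ be its encoding, adjacency and decoding matrices. Then $I-F$ is invertible, and the system matrix $M$, i.e. the matrix satisfying $\mathcal Z=\mathcal X(S)\,M$ for every value of the source processes, is $$M=A\,(I-F)^{-1}\,B^T .$$
   Context: ADT network model. $G=(\mathcal V,\mathcal E)$ is a directed acyclic network whose nodes (''supernodes'') $V\in\mathcal V$ each consist of a finite set of input ports $I(V)$ and output ports $O(V)$, all ports being distinct. Each edge $(e,e')\in\mathcal E$ goes from an output port of one supernode to an input port of another supernode. Fix a finite field $\mathbb F_q$; each edge carries one symbol of $\mathbb F_q$. The source $S$ has source processes $\mathcal X(S)=[X(S,1),\dots,X(S,\mu(S))]$ with $\mu(S)\le |O(S)|$. Linear coding rules: - Each output port $e\in O(V)$ carries $Y(e)=\sum_{e'\in I(V)}\beta_{(e',e)}Y(e')$. If $V=S$, the term $\sum_{i}\alpha_{(i,e)}X(S,i)$ is added. - An output port sends the same symbol on all of its outgoing edges (broadcast). - An input port $e'$ receives the $\mathbb F_q$-sum of the symbols on all edges entering it: $Y(e')=\sum_{(e,e')\in\mathcal E}Y(e)$ (additive MAC). - Destination $T$ outputs $Z(T,k)=\sum_{e'\in I(T)}\epsilon_{(e',(T,k))}Y(e')$ for $k=1,\dots,\nu(T)$. The coefficients $\alpha,\beta,\epsilon\in\mathbb F_q$ are free. Write $\mathcal Z=[\mathcal Z(T_1),\dots,\mathcal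 Z(T_N)]$ for the row vector of all destination outputs. Matrices. Index all ports as $e_1,\dots,e_m$. The adjacency matrix $F$ is the $m\times m$ matrix with entries $$F_{i,j}=\begin{cases}1 & \text{if } (e_i,e_j)\in\mathcal E,\\ \beta_{(e_i,e_j)} & \text{if } e_i\in I(V),\ e_j\in O(V) \text{ for some supernode } V,\\ 0 & \text{otherwise.}\end{cases}$$ The encoding matrix $A$ is the $\mu(S)\times m$ matrix with $A_{i,j}=\alpha_{(i,e_j)}$ if $e_j\in O(S)$, and $0$ otherwise. The decoding matrix $B$ is $|\mathcal Z|\times m$. Its rows are indexed by the pairs $(T_j,k)$, and its entry in row $(T_j,k)$, column $e_i$ is $\epsilon_{(e_i,(T_j,k))}$ if $e_i\in I(T_j)$, and $0$ otherwise. *)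

From HB Require Import structures.
From mathcomp Require Import all_boot all_order all_algebra all_field.
Set Implicit Arguments. Unset Strict Implicit. Unset Printing Implicit Defensive.
Import GRing.Theory.
Local Open Scope ring_scope.

(* ADT network with m ports indexed by 'I_m.
   - node e   : the supernode (in the finite type Vt) owning port e
   - isin e   : true iff e is an input port (otherwise an output port)
   - E e e'   : there is an edge from port e to port e'                     *)

Definition wf_edges (Vt : finType) (m : nat) (node : 'I_m -> Vt)
  (isin : 'I_m -> bool) (E : rel 'I_m) : Prop :=
  forall e e', E e e' -> [&& ~~ isin e, isin e' & node e != node e'].

Definition snrel (Vt : finType) (m : nat) (node : 'I_m -> Vt) (E : rel 'I_m) : rel Vt :=
  fun v w => [exists e, exists e', [&& E e e', node e == v & node e' == w]].

Definition acyclic_net (Vt : finType) (m : nat) (node : 'I_m -> Vt) (E : rel 'I_m) : Prop :=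
  forall v : Vt, ~~ [exists w, snrel node E v w && connect (snrel node E) w v].

(* Index type of the destination outputs (T_j, k), k < nu(T_j). *)
Definition zidx (N : nat) (nu : 'I_N -> nat) : finType := {j : 'I_N & 'I_(nu j)}.

Definition adjmx (K : fieldType) (Vt : finType) (m : nat) (node : 'I_m -> Vt)
  (isin : 'I_m -> bool) (E : rel 'I_m) (beta : 'I_m -> 'I_m -> K) : 'M[K]_m :=
  \matrix_(i < m, j < m)
    if E i j then 1
    else if [&& isin i, ~~ isin j & node i == node j] then beta i j else 0.

Definition encmx (K : fieldType) (Vt : finType) (m mu : nat) (node : 'I_m -> Vt)
  (isin : 'I_m -> bool) (S : Vt) (alpha : 'I_mu -> 'I_m -> K) : 'M[K]_(mu, m) :=
  \matrix_(i < mu, j < m) if (node j == S) && ~~ isin j then alpha i j else 0.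

Definition decmx (K : fieldType) (Vt : finType) (m N : nat) (node : 'I_m -> Vt)
  (isin : 'I_m -> bool) (T : 'I_N -> Vt) (nu : 'I_N -> nat)
  (eps : zidx nu -> 'I_m -> K) : 'M[K]_(#|{: zidx nu}|, m) :=
  \matrix_(r < #|{: zidx nu}|, i < m)
    let p := enum_val r in
    if isin i && (node i == T (tag p)) then eps p i else 0.

(* The linear coding rules: Y is the vector of port symbols, X the source processes. *)
Definition network_eqs (K : fieldType) (Vt : finType) (m mu : nat) (node : 'I_m -> Vt)
  (isin : 'I_m -> bool) (E : rel 'I_m) (S : Vt) (alpha : 'I_mu -> 'I_m -> K)
  (beta : 'I_m -> 'I_m -> K) (X : 'rV[K]_mu) (Y : 'rV[K]_m) : Prop :=
  forall e : 'I_m,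
    Y 0 e =
      if isin e then
        (* additive MAC: sum of the symbols on all incoming edges *)
        \sum_(e' | E e' e) Y 0 e'
      else
        \sum_(e' | isin e' && (node e' == node e)) beta e' e * Y 0 e'
        + (if node e == S then \sum_(i < mu) alpha i e * X 0 i else 0).

Definition dest_out (K : fieldType) (Vt : finType) (m N : nat) (node : 'I_m -> Vt)
  (isin : 'I_m -> bool) (T : 'I_N -> Vt) (nu : 'I_N -> nat)
  (eps : zidx nu -> 'I_m -> K) (Y : 'rV[K]_m) : 'rV[K]_(#|{: zidx nu}|) :=
  \row_(r < #|{: zidx nu}|)
    let p := enum_val r in
    \sum_(e | isin e && (node e == T (tag p))) eps p e * Y 0 e.

From HB Require Import structures.
From mathcomp Require Import all_boot all_order all_algebra all_field.
Import GRing.Theory.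
Local Open Scope ring_scope.
Set Implicit Arguments.
Unset Strict Implicit.

(* The coding rules say that the port vector satisfies Y = Y F + X A, and the
   destination outputs are Z = Y B^T; so it suffices that I - F is invertible,
   i.e. that F fixes no nonzero row vector v.  If v F = v, the entry of v at an
   input port is a combination of entries at output ports of strictly earlier
   supernodes, and the entry at an output port a combination of entries at
   input ports of its own supernode.  Induction on the number of ancestors of
   a supernode, which acyclicity makes strictly increasing along edges, then
   gives v = 0. *)

Lemma unitmx_1B_fixed_row0 (K : fieldType) (n : nat) (F : 'M[K]_n) :
  (forall v : 'rV[K]_n, v *m F = v -> v = 0) -> (1%:M - F) \in unitmx.
Proof.
move=> fixed0; rewrite -row_free_unit -kermx_eq0; apply/eqP/row_matrixP => i.
rewrite row0; apply: fixed0; apply/eqP; rewrite eq_sym -subr_eq0.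
rewrite -{1}[row i _]mulmx1 -mulmxBr; apply/eqP/sub_kermxP/row_sub.
Qed.

Section AdtNetwork.
Variables (K : fieldType) (Vt : finType) (m : nat)
  (node : 'I_m -> Vt) (isin : 'I_m -> bool) (E : rel 'I_m)
  (beta : 'I_m -> 'I_m -> K).
Hypothesis wfE : wf_edges node isin E.

Local Notation F := (adjmx node isin E beta).

Lemma adjmx_in i e : isin e -> F i e = (E i e)%:R.
Proof. by move=> ine; rewrite mxE ine andbF; case: (E i e). Qed.

Lemma adjmx_out i e : ~~ isin e ->
  F i e = if isin i && (node i == node e) then beta i e else 0.
Proof.
move=> oute; rewrite mxE oute; case Eie: (E i e) => //.
by case/and3P: (wfE Eie) => _ ine; rewrite ine in oute.
Qed.

Lemma network_eqs_mx (mu : nat) (S : Vt) (alpha : 'I_mu -> 'I_m -> K)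
    (X : 'rV[K]_mu) (Y : 'rV[K]_m) :
  network_eqs node isin E S alpha beta X Y ->
  Y = Y *m F + X *m encmx node isin S alpha.
Proof.
move=> eqsXY; apply/rowP => e; rewrite !mxE eqsXY.
have [ine | oute] := boolP (isin e).
  rewrite [s in _ = _ + s]big1 => [|i _]; last by rewrite mxE ine andbF mulr0.
  rewrite addr0 [RHS](bigID (fun i => E i e)) /= [s in _ = _ + s]big1 => [|i].
    by rewrite addr0; apply: eq_bigr => i Eie; rewrite adjmx_in // Eie mulr1.
  by rewrite adjmx_in // => /negbTE->; rewrite mulr0.
congr (_ + _).
  rewrite [RHS](bigID (fun i => isin i && (node i == node e))) /=.
  rewrite [s in _ = _ + s]big1 => [|i /negbTE ie]; last by rewrite adjmx_out // ie mulr0.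
  by rewrite addr0; apply: eq_bigr => i ie; rewrite adjmx_out // ie mulrC.
case: ifP => eS; last by rewrite big1 // => i _; rewrite mxE eS mulr0.
by apply: eq_bigr => i _; rewrite mxE eS oute mulrC.
Qed.

Definition ancestors (v : Vt) : {set Vt} :=
  [set w | [exists u, snrel node E w u && connect (snrel node E) u v]].

Hypothesis acyclic : acyclic_net node E.

Lemma card_ancestors_lt w v :
  snrel node E w v -> (#|ancestors w| < #|ancestors v|)%N.
Proof.
move=> wv; apply/proper_card/properP; split.
  apply/subsetP => x; rewrite !inE => /existsP[u /andP[xu uw]].
  by apply/existsP; exists u; rewrite xu (connect_trans uw) ?connect1.
exists w; rewrite !inE; last exact: acyclic.
by apply/existsP; exists v; rewrite wv connect0.
Qed.

Lemma adjmx_fixed_row0 (v : 'rV[K]_m) : v *m F = v -> v = 0.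
Proof.
move=> fixv; apply/rowP => e; rewrite mxE.
move: {2}#|ancestors (node e)| (erefl #|ancestors (node e)|) => n.
elim/ltn_ind: n e => n IHn e def_n.
have in_port0 e' : isin e' -> node e' = node e -> v 0 e' = 0.
  move=> ine' ee'; rewrite -fixv mxE big1 // => i _; rewrite adjmx_in //.
  case Eie': (E i e'); last by rewrite mulr0.
  have ie' : snrel node E (node i) (node e').
    by apply/existsP; exists i; apply/existsP; exists e'; rewrite Eie' !eqxx.
  by rewrite (IHn _ _ i erefl) ?mul0r // -def_n -ee' card_ancestors_lt.
have [ine | oute] := boolP (isin e); first exact: in_port0.
rewrite -fixv mxE big1 // => i _; rewrite adjmx_out //.
case: ifP => [/andP[ini /eqP ie] | _]; last by rewrite mulr0.
by rewrite in_port0 ?mul0r.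
Qed.

Lemma unitmx_1B_adjmx : (1%:M - F) \in unitmx.
Proof. exact/unitmx_1B_fixed_row0/adjmx_fixed_row0. Qed.

End AdtNetwork.

Lemma dest_out_mulmx (K : fieldType) (Vt : finType) (m N : nat)
    (node : 'I_m -> Vt) (isin : 'I_m -> bool) (T : 'I_N -> Vt) (nu : 'I_N -> nat)
    (eps : zidx nu -> 'I_m -> K) (Y : 'rV[K]_m) :
  dest_out node isin T eps Y = Y *m (decmx node isin T eps)^T.
Proof.
apply/rowP => r; rewrite !mxE (bigID (fun e => isin e && (node e == T (tag (enum_val r))))) /=.
rewrite [X in _ = _ + X]big1 => [|e /negbTE Te]; last by rewrite !mxE /= Te mulr0.
by rewrite addr0; apply: eq_bigr => e Te; rewrite !mxE /= Te mulrC.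
Qed.

Theorem theorem1 (K : finFieldType) (Vt : finType) (m mu N : nat)
  (node : 'I_m -> Vt) (isin : 'I_m -> bool) (E : rel 'I_m)
  (S : Vt) (T : 'I_N -> Vt) (nu : 'I_N -> nat)
  (alpha : 'I_mu -> 'I_m -> K) (beta : 'I_m -> 'I_m -> K)
  (eps : zidx nu -> 'I_m -> K) :
  wf_edges node isin E ->
  acyclic_net node E ->
  (mu <= #|[set e | (node e == S) && ~~ isin e]|)%N ->
  (1%:M - adjmx node isin E beta) \in unitmx /\
  forall (X : 'rV[K]_mu) (Y : 'rV[K]_m),
    network_eqs node isin E S alpha beta X Y ->
    dest_out node isin T eps Y =
      X *m (encmx node isin S alpha *m invmx (1%:M - adjmx node isin E beta)
            *m (decmx node isin T eps)^T).
Proof.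
move=> wfE acyclic _; have unitIF := unitmx_1B_adjmx beta wfE acyclic.
split=> // X Y /(network_eqs_mx wfE) eqY.
set F := adjmx node isin E beta in unitIF eqY *.
have solY : Y *m (1%:M - F) = X *m encmx node isin S alpha.
  by rewrite mulmxBr mulmx1 {1}eqY addrAC subrr add0r.
by rewrite dest_out_mulmx !mulmxA -solY mulmxK.
Qed.
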